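(* Let $f(x)=\frac1n\sum_{i=1}^nf_i(x)$ on $\mathbb{R}^d$, where each $f_i$ is convex and $L_i$-smooth, and let $x^*$ be a minimizer of $f$. Consider SGD with the SPS$^\ell_{\max}$ stepsize (defined in the context), and let $\alpha:=\min\{\frac1{2cL_{\max}},\gamma_b\}$ with $L_{\max}=\max_iL_i$. (i) If $c=1$, then for every $K\ge1$, $\mathbb{E}[f(\bar x^K)-f(x^* )]\le\frac{\|x^0-x^*\|^2}{\alpha K}+\frac{2\gamma_b\hat\sigma_B^2}{\alpha}$, where $\bar x^K=\frac1K\sum_{k=0}^{K-1}x^k$. (ii) If in addition $f$ is $\mu$-strongly convex and $c\ge1/2$, then for every $k\ge0$, $\mathbb{E}\|x^k-x^*\|^2\le(1-\mu\alpha)^k\|x^0-x^*\|^2+\frac{2\gamma_b\hat\sigma_B^2}{\mu\alpha}$.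
   Context: Minibatches: fix a batch size $B$; at each iteration a subset $\mathcal S_k\subseteq[n]$, $|\mathcal S_k|=B$, is sampled uniformly at random, independently across iterations. For $\mathcal S\subseteq[n]$, $f_{\mathcal S}:=\frac1{|\mathcal S|}\sum_{i\in\mathcal S}f_i$, $f^*_{\mathcal S}:=\inf_xf_{\mathcal S}(x)$ (assumed finite), and $\ell^*_{\mathcal S}$ is a given real number with $\ell^*_{\mathcal S}\le f^*_{\mathcal S}$. SGD: $x^{k+1}=x^k-\gamma_k\nabla f_{\mathcal S_k}(x^k)$ from given $x^0$. SPS$^\ell_{\max}$ stepsize: $\gamma_k=\min\left\{\frac{f_{\mathcal S_k}(x^k)-\ell^*_{\mathcal S_k}}{c\|\nabla f_{\mathcal S_k}(x^k)\|^2},\ \gamma_b\right\}$ with constants $c,\gamma_b>0$; if $\nabla f_{\mathcal S_k}(x^k)=0$ the iterate is not updated. $\hat\sigma_B^2:=\mathbb{E}_{\mathcal S}[f_{\mathcal S}(x^* )-\ell^*_{\mathcal S}]=f(x^* )-\mathbb{E}_{\mathcal S}[\ell^*_{\mathcal S}]$ with $\mathcal S$ uniform over subsets of size $B$. *)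

From HB Require Import structures.
From mathcomp Require Import all_boot all_order all_algebra.
From mathcomp Require Import all_classical all_reals all_analysis.
Set Implicit Arguments. Unset Strict Implicit. Unset Printing Implicit Defensive.
Import Order.TTheory GRing.Theory Num.Theory.
Import numFieldNormedType.Exports.
Local Open Scope ring_scope.

Section SPS.
Variables (R : realType) (n d : nat).

(* Euclidean inner product and norm on R^d = 'rV[R]_d
   (the library's built-in norm on matrices is the max norm, so we
   define the Euclidean one explicitly). *)
Definition dotp (u v : 'rV[R]_d) : R := \sum_(j < d) u 0 j * v 0 j.
Definition sqnorm (u : 'rV[R]_d) : R := dotp u u.
Definition enorm (u : 'rV[R]_d) : R := Num.sqrt (sqnorm u).

Definition is_gradient (h : 'rV[R]_d -> R) (g : 'rV[R]_d -> 'rV[R]_d) : Prop :=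
  forall x, differentiable h x /\ forall v, ('d h x : 'rV[R]_d -> R) v = dotp (g x) v.

Definition convex_fun (h : 'rV[R]_d -> R) : Prop :=
  forall (x y : 'rV[R]_d) (t : R), 0 <= t <= 1 ->
    h (t *: x + (1 - t) *: y) <= t * h x + (1 - t) * h y.

Definition smooth_with (g : 'rV[R]_d -> 'rV[R]_d) (L : R) : Prop :=
  forall x y, enorm (g x - g y) <= L * enorm (x - y).

Definition strongly_convex_with (h : 'rV[R]_d -> R) (g : 'rV[R]_d -> 'rV[R]_d)
  (mu : R) : Prop :=
  forall x y, h y >= h x + dotp (g x) (y - x) + mu / 2 * sqnorm (y - x).

Variables (f : 'I_n -> 'rV[R]_d -> R) (g : 'I_n -> 'rV[R]_d -> 'rV[R]_d).

Definition favg (x : 'rV[R]_d) : R := (n%:R)^-1 * \sum_(i < n) f i x.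
Definition gavg (x : 'rV[R]_d) : 'rV[R]_d := (n%:R)^-1 *: \sum_(i < n) g i x.

Definition fS (S : {set 'I_n}) (x : 'rV[R]_d) : R :=
  (#|S|%:R)^-1 * \sum_(i in S) f i x.
Definition gS (S : {set 'I_n}) (x : 'rV[R]_d) : 'rV[R]_d :=
  (#|S|%:R)^-1 *: \sum_(i in S) g i x.

Definition batches (B : nat) : {set {set 'I_n}} := [set S : {set 'I_n} | #|S| == B].

Variables (ell : {set 'I_n} -> R) (c gamma_b : R).

Definition sps_step (S : {set 'I_n}) (x : 'rV[R]_d) : R :=
  Num.min ((fS S x - ell S) / (c * sqnorm (gS S x))) gamma_b.

Definition sgd_step (x : 'rV[R]_d) (S : {set 'I_n}) : 'rV[R]_d :=
  if gS S x == 0 then x else x - sps_step S x *: gS S x.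

(* x^k from x^0 and the sequence of sampled batches S_0, ..., S_{k-1} *)
Definition iterate (x0 : 'rV[R]_d) (s : seq {set 'I_n}) : 'rV[R]_d :=
  foldl sgd_step x0 s.

(* Expectation over K i.i.d. uniform batches of size B: the uniform
   average over all K-tuples of size-B subsets. *)
Definition batch_tuples (B K : nat) : {set (K.-tuple {set 'I_n})} :=
  [set t : K.-tuple {set 'I_n} | all (fun S => S \in batches B) t].

Definition expect (B K : nat) (Phi : K.-tuple {set 'I_n} -> R) : R :=
  (#|batch_tuples B K|%:R)^-1 * \sum_(t in batch_tuples B K) Phi t.

Definition sigma_hat2 (B : nat) (xstar : 'rV[R]_d) : R :=
  favg xstar - (#|batches B|%:R)^-1 * \sum_(S in batches B) ell S.

Definition avg_iterate (x0 : 'rV[R]_d) (K : nat) (t : K.-tuple {set 'I_n})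
  : 'rV[R]_d :=
  (K%:R)^-1 *: \sum_(k < K) iterate x0 (take k t).

End SPS.

(* Every minibatch loss f_S is convex, L_max-smooth and bounded below by l_S,
   so |grad f_S|^2 <= 2 L_max (f_S - l_S): the Polyak step is never shorter
   than alpha, while gamma c |grad f_S|^2 <= f_S - l_S controls the quadratic
   term in the expansion of |x_(k+1) - xstar|^2.  Every index lies in equally
   many batches, so E_S f_S = f, and taking expectations gives the drift
   inequality
     E |x_(k+1) - xstar|^2 <= |x_k - xstar|^2 - alpha (f x_k - f xstar)
                               + 2 gamma_b sigma
   for c >= 1, resp. E |x_(k+1) - xstar|^2 <= (1 - mu alpha) |x_k - xstar|^2
   + 2 gamma_b sigma for c >= 1/2 and mu-strongly convex f.  The expectation
   over K-tuples of batches is an iterated average, so the drift inequality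
   unrolls; for (i), Jensen's inequality handles the averaged iterate. *)

From Pilot Require Import Defs.
From HB Require Import structures.
From mathcomp Require Import all_boot all_order all_algebra all_fingroup.
From mathcomp Require Import all_classical all_reals all_analysis.
From mathcomp Require Import ring lra.
Set Implicit Arguments.
Unset Strict Implicit.
Unset Printing Implicit Defensive.

Import Order.TTheory GRing.Theory Num.Theory.
Import numFieldNormedType.Exports.
Local Open Scope ring_scope.

Section Euclidean.
Variables (R : realType) (d : nat).
Implicit Types u v w x y : 'rV[R]_d.

Lemma dotpC u v : dotp u v = dotp v u.
Proof. by apply: eq_bigr => j _; rewrite mulrC. Qed.

Lemma dotpDl u v w : dotp (u + v) w = dotp u w + dotp v w.
Proof. by rewrite /dotp -big_split; apply: eq_bigr => j _; rewrite mxE mulrDl. Qed.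

Lemma dotpZl (a : R) u w : dotp (a *: u) w = a * dotp u w.
Proof. by rewrite /dotp mulr_sumr; apply: eq_bigr => j _; rewrite mxE mulrA. Qed.

Lemma dotpNl u w : dotp (- u) w = - dotp u w.
Proof. by rewrite -scaleN1r dotpZl mulN1r. Qed.

Lemma dotpBl u v w : dotp (u - v) w = dotp u w - dotp v w.
Proof. by rewrite dotpDl dotpNl. Qed.

Lemma dotpZr (a : R) u w : dotp w (a *: u) = a * dotp w u.
Proof. by rewrite dotpC dotpZl dotpC. Qed.

Lemma dotpNr u w : dotp w (- u) = - dotp w u.
Proof. by rewrite dotpC dotpNl dotpC. Qed.

Lemma dotpBr u v w : dotp w (u - v) = dotp w u - dotp w v.
Proof. by rewrite !(dotpC w) dotpBl. Qed.

Lemma dotp0l w : dotp 0 w = 0.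
Proof. by rewrite -(scale0r 0) dotpZl mul0r. Qed.

Lemma dotp_suml (I : finType) (P : pred I) (F : I -> 'rV[R]_d) w :
  dotp (\sum_(i | P i) F i) w = \sum_(i | P i) dotp (F i) w.
Proof.
rewrite /dotp exchange_big /=; apply: eq_bigr => j _.
by rewrite summxE mulr_suml.
Qed.

Lemma sqnorm_ge0 u : 0 <= sqnorm u.
Proof. by apply: sumr_ge0 => j _; rewrite -expr2 sqr_ge0. Qed.

Lemma sqnorm_eq0 u : (sqnorm u == 0) = (u == 0).
Proof.
apply/idP/eqP => [|->]; last by rewrite /sqnorm dotp0l.
rewrite psumr_eq0 => [/allP u0|j _]; last by rewrite -expr2 sqr_ge0.
apply/rowP => j; rewrite mxE; apply/eqP.
by have /implyP/(_ isT) := u0 j (mem_index_enum j); rewrite mulf_eq0 orbb.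
Qed.

Lemma sqnormN u : sqnorm (- u) = sqnorm u.
Proof. by rewrite /sqnorm dotpNl dotpNr opprK. Qed.

Lemma sqnormZ (a : R) u : sqnorm (a *: u) = a ^+ 2 * sqnorm u.
Proof. by rewrite /sqnorm dotpZl dotpZr mulrA expr2. Qed.

Lemma sqnormB u v : sqnorm (u - v) = sqnorm u - 2 * dotp u v + sqnorm v.
Proof. by rewrite /sqnorm dotpBl !dotpBr (dotpC v u); ring. Qed.

Lemma sqnorm_sub_scale (x z G : 'rV[R]_d) (a : R) :
  sqnorm (x - a *: G - z) = sqnorm (x - z) + 2 * a * dotp G (z - x) + a ^+ 2 * sqnorm G.
Proof.
have -> : x - a *: G - z = (x - z) - a *: G by rewrite addrAC.
by rewrite [LHS]sqnormB dotpZr sqnormZ dotpBl dotpBr (dotpC x) (dotpC z); ring.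
Qed.

Lemma sqr_enorm u : enorm u ^+ 2 = sqnorm u.
Proof. by rewrite sqr_sqrtr // sqnorm_ge0. Qed.

Lemma enorm_ge0 u : 0 <= enorm u.
Proof. exact: sqrtr_ge0. Qed.

Lemma dotp_le_sqnorm (s : R) w v : 2 * s * dotp w v <= sqnorm w + s ^+ 2 * sqnorm v.
Proof. by have := sqnorm_ge0 (w - s *: v); rewrite sqnormB sqnormZ dotpZr; lra. Qed.

Lemma dotp_le_enorm (s : R) w v : 0 < s -> enorm w <= s * enorm v ->
  dotp w v <= s * sqnorm v.
Proof.
move=> s0 wv; rewrite -(ler_pM2l (_ : 0 < 2 * s)) ?mulr_gt0 //.
apply: le_trans (dotp_le_sqnorm s w v) _.
have : sqnorm w <= s ^+ 2 * sqnorm v.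
  by rewrite -!sqr_enorm -exprMn ler_sqr // nnegrE ?mulr_ge0 ?enorm_ge0 ?ltW.
lra.
Qed.

End Euclidean.

Section Smooth.
Variables (R : realType) (d : nat).
Variables (h : 'rV[R]_d -> R) (gr : 'rV[R]_d -> 'rV[R]_d) (L : R).
Hypotheses (h_grad : is_gradient h gr) (L_gt0 : 0 < L) (gr_smooth : smooth_with gr L).

Lemma is_derive_line x v (t : R) :
  is_derive t (1 : R) (fun s : R => h (x + s *: v)) (dotp (gr (x + t *: v)) v).
Proof.
have [dh dhE] := h_grad (x + t *: v).
have shiftE : (fun s : R => s^-1 *: (((fun s0 : R => h (x + s0 *: v)) \o shift t) (s *: 1)
      - h (x + t *: v))) =
   (fun s : R => s^-1 *: ((h \o shift (x + t *: v)) (s *: v) - h (x + t *: v))).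
  apply/funext => s /=; congr (_ *: (h _ - _)).
  by rewrite [s *: 1]mulr1 scalerDl addrCA addrA.
have dv : derivable h (x + t *: v) v by exact: diff_derivable.
apply: DeriveDef; first by rewrite /derivable shiftE.
by rewrite /derive shiftE -/(derive h _ v) deriveE // dhE.
Qed.

Lemma dotp_smooth_increment x v (t : R) : 0 < t ->
  dotp (gr (x + t *: v) - gr x) v <= L * t * sqnorm v.
Proof.
move=> t0; apply: dotp_le_enorm; first exact: mulr_gt0.
have := gr_smooth (x + t *: v) x; rewrite addrAC subrr add0r.
by rewrite /enorm sqnormZ sqrtrM ?sqr_ge0 // sqrtr_sqr gtr0_norm // mulrA.
Qed.

(* [psi s] is [h (x + s v)] minus its tangent at [0] and minus [L/2 |v|^2 s^2];
   smoothness makes it nonincreasing on [0, 1]. *)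
Lemma descent_upper x y : h y <= h x + dotp (gr x) (y - x) + L / 2 * sqnorm (y - x).
Proof.
set v := y - x; set a := dotp (gr x) v; set b := L / 2 * sqnorm v.
pose psi := (fun s : R => h (x + s *: v)) - a \*: id - b \*: (@id R) ^+ 2.
have psiE s : psi s = h (x + s *: v) - a * s - b * s ^+ 2 by [].
have psi' (t : R) : is_derive t (1 : R) psi (dotp (gr (x + t *: v)) v - a - L * sqnorm v * t).
  apply: is_derive_eq; rewrite /psi.
  apply: is_deriveB; first apply: is_deriveB; first exact: is_derive_line.
  by rewrite /GRing.scale /= !mulr1 expr1 /b; field.
have psi_der (t : R) : derivable psi t 1 by have [] := psi' t.
have psi_cont : {within `[0, 1], continuous psi}%classic.
  by apply: derivable_within_continuous => t _; exact: psi_der.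
have psi'_le0 t : t \in `]0, 1[ -> psi^`()%classic t <= 0.
  rewrite in_itv /= => /andP[t0 _]; rewrite derive1E derive_val.
  by have := dotp_smooth_increment x v t0; rewrite dotpBl /a; lra.
have := ler0_derive1_le_cc (fun t _ => psi_der t) psi'_le0 psi_cont.
move=> /(_ 1 0); rewrite !in_itv /= !lexx ler01 => /(_ isT isT isT).
rewrite !psiE scale0r addr0 scale1r /v [x + _]addrC subrK expr1n expr0n /=; lra.
Qed.

End Smooth.

Lemma descent_lower (R : realType) (d : nat) (h : 'rV[R]_d -> R)
  (gr : 'rV[R]_d -> 'rV[R]_d) (L : R) :
  is_gradient h gr -> 0 < L -> smooth_with gr L -> forall x y,
  h x + dotp (gr x) (y - x) - L / 2 * sqnorm (y - x) <= h y.
Proof.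
move=> h_grad L0 smooth x y.
have Nh_grad : is_gradient (- h) (fun x => - gr x).
  move=> z; have [dh dhE] := h_grad z; split; first exact: differentiableN.
  by move=> v; rewrite diffN // opprfctE dhE dotpNl.
have Nsmooth : smooth_with (fun x => - gr x) L.
  by move=> u w; rewrite -opprD /enorm sqnormN; exact: smooth.
by have := descent_upper Nh_grad L0 Nsmooth x y; rewrite !opprfctE dotpNl; lra.
Qed.

Lemma ler_limit_affine (R : realFieldType) (x y C : R) : 0 <= C ->
  (forall t, 0 < t <= 1 -> x <= y + C * t) -> x <= y.
Proof.
move=> C0 xy; apply/ler_addgt0Pr => e e0.
have C1 : 0 < C + 1 by lra.
set t := Num.min 1 (e / (C + 1)).
have t0 : 0 < t by rewrite lt_min ltr01 divr_gt0.
apply: le_trans (xy t _) _; first by rewrite t0 ge_min lexx.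
rewrite lerD2l; apply: (@le_trans _ _ (C * (e / (C + 1)))).
  by rewrite ler_wpM2l // ge_min lexx orbT.
by rewrite mulrA ler_pdivrMr // mulrDr mulr1; lra.
Qed.

(* Smoothness only serves to make the chord remainder [O(t)], so that no limit of
   difference quotients is needed. *)
Lemma convex_gradient_ineq (R : realType) (d : nat) (h : 'rV[R]_d -> R)
  (gr : 'rV[R]_d -> 'rV[R]_d) (L : R) :
  is_gradient h gr -> 0 < L -> smooth_with gr L -> convex_fun h ->
  forall x y, h x + dotp (gr x) (y - x) <= h y.
Proof.
move=> h_grad L0 smooth h_conv x y; set v := y - x.
apply: (@ler_limit_affine _ _ _ (L / 2 * sqnorm v)).
  by rewrite mulr_ge0 ?sqnorm_ge0 ?divr_ge0 ?ltW.
move=> t /andP[t0 t1]; set z := x + t *: v.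
have zE : z = t *: y + (1 - t) *: x by apply/rowP => j; rewrite !mxE; ring.
have hz_le : h z <= t * h y + (1 - t) * h x by rewrite zE h_conv // ltW.
have := descent_lower h_grad L0 smooth x z.
rewrite [z - x]addrAC subrr add0r dotpZr sqnormZ => hz_ge.
rewrite -(ler_pM2l t0); have := sqnorm_ge0 v; nra.
Qed.

Section FirstOrder.
Variables (R : realType) (d : nat) (h : 'rV[R]_d -> R) (gr : 'rV[R]_d -> 'rV[R]_d).

Lemma sqnorm_gradient_le (L l : R) x : 0 < L ->
  (forall y, h y <= h x + dotp (gr x) (y - x) + L / 2 * sqnorm (y - x)) ->
  (forall y, l <= h y) -> sqnorm (gr x) <= 2 * L * (h x - l).
Proof.
move=> L0 descent_x l_le; set y := x - L^-1 *: gr x.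
have gap : L^-1 / 2 * sqnorm (gr x) <= h x - l.
  have := descent_x y; have := l_le y.
  rewrite /y [_ - x]addrAC subrr add0r dotpNr dotpZr sqnormN sqnormZ -/(sqnorm _).
  have -> : L / 2 * (L^-1 ^+ 2 * sqnorm (gr x)) = L^-1 / 2 * sqnorm (gr x).
    by field; rewrite gt_eqF.
  lra.
have -> : sqnorm (gr x) = 2 * L * (L^-1 / 2 * sqnorm (gr x)) by field; rewrite gt_eqF.
by rewrite ler_wpM2l // mulr_ge0 // ltW.
Qed.

Lemma jensen_gradient_ineq K (xs : 'I_K -> 'rV[R]_d) : (0 < K)%N ->
  (forall x y, h x + dotp (gr x) (y - x) <= h y) ->
  h ((K%:R)^-1 *: \sum_(j < K) xs j) <= (K%:R)^-1 * \sum_(j < K) h (xs j).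
Proof.
move=> K_gt0 grad_ineq; set xb := _ *: _.
have K_neq0 : K%:R != 0 :> R by rewrite pnatr_eq0 -lt0n.
have : \sum_(j < K) (h xb + dotp (gr xb) (xs j - xb)) <= \sum_(j < K) h (xs j).
  by apply: ler_sum => j _; exact: grad_ineq.
have xsE : \sum_(j < K) (xs j - xb) = 0.
  by rewrite sumrB sumr_const card_ord -scaler_nat /xb scalerA mulfV // scale1r subrr.
under eq_bigr do rewrite dotpC.
rewrite big_split /= -dotp_suml xsE dotp0l sumr_const card_ord addr0 => sum_le.
by rewrite -(@ler_pM2l _ K%:R) ?ltr0n // mulrA mulfV // mul1r mulr_natl.
Qed.

Lemma strong_convexity_le_smoothness (mu L : R) x : (0 < d)%N ->
  (forall y, h x + dotp (gr x) (y - x) + mu / 2 * sqnorm (y - x) <= h y) ->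
  (forall y, h y <= h x + dotp (gr x) (y - x) + L / 2 * sqnorm (y - x)) -> mu <= L.
Proof.
move=> d_gt0 strong descent_x; set y := x + const_mx 1.
have sqnorm_pos : 0 < sqnorm (y - x).
  rewrite /y addrC addKr /sqnorm /dotp (eq_bigr (fun=> 1)) => [|j _]; last first.
    by rewrite mxE mulr1.
  by rewrite sumr_const card_ord ltr0n.
have := strong y; have := descent_x y => le1 le2.
by rewrite -(ler_pM2r (_ : 0 < sqnorm (y - x) / 2)) ?divr_gt0 //; lra.
Qed.

End FirstOrder.

Section Mean.
Variables (R : realFieldType) (T : finType).
Implicit Types (A : {set T}) (h : T -> R).

Definition mean A h : R := (#|A|%:R)^-1 * \sum_(t in A) h t.

Lemma eq_mean A h1 h2 : {in A, h1 =1 h2} -> mean A h1 = mean A h2.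
Proof. by move=> h12; rewrite /mean (eq_bigr _ h12). Qed.

Lemma ler_mean A h1 h2 : {in A, forall t, h1 t <= h2 t} -> mean A h1 <= mean A h2.
Proof. by move=> h12; rewrite ler_wpM2l ?invr_ge0 // ler_sum. Qed.

Lemma meanD A h1 h2 : mean A (fun t => h1 t + h2 t) = mean A h1 + mean A h2.
Proof. by rewrite /mean big_split mulrDr. Qed.

Lemma meanZ A a h : mean A (fun t => a * h t) = a * mean A h.
Proof. by rewrite /mean -mulr_sumr mulrCA. Qed.

Lemma meanB A h1 h2 : mean A (fun t => h1 t - h2 t) = mean A h1 - mean A h2.
Proof. by rewrite /mean sumrB mulrBr. Qed.

Lemma mean_cst A a : (0 < #|A|)%N -> mean A (fun=> a) = a.
Proof.
move=> A0; rewrite /mean sumr_const -[a *+ _]mulr_natr mulrC mulfK //.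
by rewrite pnatr_eq0 -lt0n.
Qed.

End Mean.

Section Tuples.
Variables (T : finType) (A : {set T}).

Definition tuples_in k : {set k.-tuple T} := [set t : k.-tuple T | all (fun x => x \in A) t].

Lemma tuples_in0 : tuples_in 0 = [set [tuple]].
Proof. by apply/setP => t; rewrite !inE tuple0 eqxx. Qed.

Lemma sum_tuples_inS (V : nmodType) k (F : seq T -> V) :
  \sum_(t in tuples_in k.+1) F t = \sum_(x in A) \sum_(t in tuples_in k) F (x :: t).
Proof.
rewrite pair_big_dep /= (reindex (fun t : k.+1.-tuple T => (thead t, [tuple of behead t]))) /=.
  apply: eq_big => t; first by rewrite !inE /= {1}(tuple_eta t).
  by move=> _; rewrite {1}(tuple_eta t).
exists (fun p : T * k.-tuple T => cons_tuple p.1 p.2) => [t _ | [x t] _].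
  by apply: val_inj; rewrite /= {3}(tuple_eta t).
by rewrite theadE; congr pair; apply: val_inj.
Qed.

Lemma card_tuples_inS k : #|tuples_in k.+1| = (#|A| * #|tuples_in k|)%N.
Proof.
rewrite -sum1_card (@sum_tuples_inS _ k (fun=> 1%N)) -sum_nat_const.
by apply: eq_bigr => x _; rewrite sum1_card.
Qed.

Lemma card_tuples_in k : #|tuples_in k| = (#|A| ^ k)%N.
Proof. by elim: k => [|k IHk]; rewrite ?tuples_in0 ?cards1 // card_tuples_inS IHk expnS. Qed.

Lemma card_tuples_in_gt0 k : (0 < #|A|)%N -> (0 < #|tuples_in k|)%N.
Proof. by rewrite card_tuples_in expn_gt0 => ->. Qed.

Variable R : realFieldType.

Lemma mean_tuples_in0 (F : seq T -> R) : mean (tuples_in 0) (fun t => F t) = F [::].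
Proof. by rewrite /mean tuples_in0 cards1 big_set1 invr1 mul1r. Qed.

Lemma mean_tuples_inS k (F : seq T -> R) :
  mean (tuples_in k.+1) (fun t => F t) =
  mean A (fun x => mean (tuples_in k) (fun t => F (x :: t))).
Proof.
rewrite /mean card_tuples_inS sum_tuples_inS natrM invfM -mulrA mulr_sumr.
by congr (_ * _); apply: eq_bigr => x _; rewrite mulr_sumr.
Qed.

End Tuples.

Section Drift.
Variables (R : realFieldType) (T : finType) (A : {set T}) (X : Type).
Variable step : X -> T -> X.
Hypothesis A_gt0 : (0 < #|A|)%N.

Lemma mean_foldl_contraction (V : X -> R) (rho b : R) : 0 <= rho ->
  (forall x, mean A (fun a => V (step x a)) <= rho * V x + b) ->
  forall k x0, mean (tuples_in A k) (fun t => V (foldl step x0 t))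
    <= rho ^+ k * V x0 + b * \sum_(j < k) rho ^+ j.
Proof.
move=> rho0 drift; elim=> [|k IHk] x0.
  by rewrite (mean_tuples_in0 _ (fun s => V (foldl step x0 s))) big_ord0 mul1r mulr0 addr0.
rewrite (mean_tuples_inS _ _ (fun s => V (foldl step x0 s))) /=.
apply: le_trans (ler_mean (fun x _ => IHk (step x0 x))) _.
rewrite meanD meanZ mean_cst // big_ord_recr /= exprS -mulrA.
have := ler_wpM2l (exprn_ge0 k rho0) (drift x0); lra.
Qed.

Lemma mean_foldl_telescope (V h : X -> R) (a b : R) : (forall x, 0 <= V x) ->
  (forall x, mean A (fun s => V (step x s)) <= V x - a * h x + b) ->
  forall k x0, a * mean (tuples_in A k)
      (fun t => \sum_(j < k) h (foldl step x0 (take j t))) <= V x0 + b * k%:R.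
Proof.
move=> V_ge0 drift; elim=> [|k IHk] x0.
  rewrite (mean_tuples_in0 _ (fun s => \sum_(j < 0) h (foldl step x0 (take j s)))).
  by rewrite big_ord0 !mulr0 addr0.
rewrite (mean_tuples_inS _ _ (fun s => \sum_(j < k.+1) h (foldl step x0 (take j s)))) /=.
under eq_mean => x _ do
  rewrite (eq_mean (fun t _ => big_ord_recl _ _)) /= meanD mean_cst ?card_tuples_in_gt0 //.
rewrite meanD mean_cst // mulrDr -meanZ -lerBrDl.
apply: le_trans (ler_mean (fun x _ => IHk (step x0 x))) _.
by rewrite meanD meanZ mean_cst //; have := drift x0; rewrite -natr1; lra.
Qed.

End Drift.

Lemma sum_exprn_le_inv (R : realFieldType) (r : R) k :
  0 <= r < 1 -> \sum_(j < k) r ^+ j <= (1 - r)^-1.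
Proof.
case/andP=> r_ge0 r_lt1; have r1_gt0 : 0 < 1 - r by rewrite subr_gt0.
rewrite -(ler_pM2r r1_gt0) mulVf ?gt_eqF // mulrC -opprB mulNr -subrX1 opprB.
by rewrite lerBlDr lerDl exprn_ge0.
Qed.

Section SubsetMean.
Variables (R : realFieldType) (T : finType) (B : nat).

Let subsets := [set S : {set T} | #|S| == B].

Let multiplicity (i : T) : R := \sum_(S in subsets) (i \in S)%:R.

(* Transposing [i] and [j] permutes the [B]-subsets. *)
Let multiplicity_sym i j : multiplicity i = multiplicity j.
Proof.
pose swap (S : {set T}) := tperm i j @: S.
have swapK : involutive swap.
  by move=> S; rewrite /swap -imset_comp (eq_imset _ (tpermK i j)) imset_id.
rewrite /multiplicity (reindex_inj (inv_inj swapK)) /swap.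
apply: eq_big => S; first by rewrite !inE card_imset //; exact: perm_inj.
by move=> _; rewrite -{1}(tpermR i j) mem_imset //; exact: perm_inj.
Qed.

Let sum_subsets_mem (a : T -> R) :
  \sum_(S in subsets) \sum_(i in S) a i = \sum_i multiplicity i * a i.
Proof.
have memE S : \sum_(i in S) a i = \sum_i (i \in S)%:R * a i.
  by rewrite big_mkcond; apply: eq_bigr => i _; case: (i \in S); rewrite ?mul1r ?mul0r.
under eq_bigr => S _ do rewrite memE.
by rewrite exchange_big; apply: eq_bigr => i _; rewrite mulr_suml.
Qed.

Lemma mean_subsets_avg (a : T -> R) : (0 < B <= #|T|)%N ->
  mean subsets (fun S => (#|S|%:R)^-1 * \sum_(i in S) a i) = (#|T|%:R)^-1 * \sum_i a i.
Proof.
case/andP=> B_gt0 B_le; have [i0 _] : exists i0 : T, i0 \in T.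
  by apply/card_gt0P; exact: leq_trans B_le.
have sum_subsets (b : T -> R) :
    \sum_(S in subsets) \sum_(i in S) b i = multiplicity i0 * \sum_i b i.
  by rewrite sum_subsets_mem mulr_sumr; apply: eq_bigr => i _; rewrite (multiplicity_sym i i0).
have count_pairs : #|subsets|%:R * B%:R = multiplicity i0 * #|T|%:R.
  transitivity (\sum_(S in subsets) \sum_(i in S) (1 : R)); last first.
    by rewrite sum_subsets sumr_const.
  transitivity (\sum_(S in subsets) (B%:R : R)); first by rewrite sumr_const mulr_natl.
  by apply: eq_bigr => S; rewrite inE => /eqP <-; rewrite sumr_const.
have subsets_gt0 : (0 < #|subsets|)%N by rewrite card_draws bin_gt0.
rewrite (@eq_mean _ _ _ _ (fun S : {set T} => (B%:R)^-1 * \sum_(i in S) a i)); last first.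
  by move=> S; rewrite inE => /eqP ->.
have T_neq0 : #|T|%:R != 0 :> R by rewrite pnatr_eq0 -lt0n (leq_trans B_gt0).
rewrite meanZ /mean sum_subsets.
have -> : multiplicity i0 = #|subsets|%:R * B%:R / #|T|%:R by rewrite count_pairs mulfK.
field.
by rewrite T_neq0 !pnatr_eq0 -!lt0n B_gt0 subsets_gt0.
Qed.

End SubsetMean.

Section SPSmax.
Variables (R : realType) (n d B : nat).
Variables (f : 'I_n -> 'rV[R]_d -> R) (g : 'I_n -> 'rV[R]_d -> 'rV[R]_d) (L : 'I_n -> R).
Variables (ell : {set 'I_n} -> R) (c gamma_b : R) (xstar : 'rV[R]_d).
Hypotheses (B_gt0 : (0 < B)%N) (B_le_n : (B <= n)%N).
Hypotheses (f_grad : forall i, is_gradient (f i) (g i)) (f_convex : forall i, convex_fun (f i)).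
Hypotheses (L_gt0 : forall i, 0 < L i) (g_smooth : forall i, smooth_with (g i) (L i)).
Hypothesis ell_le : forall S, S \in batches n B -> forall x, ell S <= fS f S x.
Hypotheses (c_gt0 : 0 < c) (gamma_b_gt0 : 0 < gamma_b).

Local Notation Lmax := (\big[Num.max/0]_(i < n) L i).
Local Notation alpha := (Num.min (1 / (2 * c * Lmax)) gamma_b).
Local Notation sgd_step := (sgd_step f g ell c gamma_b).
Local Notation sig := (sigma_hat2 f ell B xstar).

Lemma expectE K (F : K.-tuple {set 'I_n} -> R) :
  expect B F = mean (tuples_in (batches n B) K) F.
Proof. by []. Qed.

Lemma Lmax_gt0 : 0 < Lmax.
Proof.
have i0 : 'I_n by exists 0%N; exact: leq_trans B_le_n.
exact: lt_le_trans (L_gt0 i0) (le_bigmax _ _ i0).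
Qed.

Lemma alpha_gt0 : 0 < alpha.
Proof. by rewrite lt_min gamma_b_gt0 andbT divr_gt0 // !mulr_gt0 // Lmax_gt0. Qed.

Lemma alpha_le_gamma_b : alpha <= gamma_b.
Proof. by rewrite ge_min lexx orbT. Qed.

Lemma batch_nonempty (S : {set 'I_n}) : S \in batches n B -> (0 < #|S|)%N.
Proof. by rewrite inE => /eqP ->. Qed.

Lemma card_batches_gt0 : (0 < #|batches n B|)%N.
Proof. by rewrite card_draws card_ord bin_gt0. Qed.

Lemma fS_gradient_ineq (S : {set 'I_n}) x y : fS f S x + dotp (gS g S x) (y - x) <= fS f S y.
Proof.
rewrite /gS dotpZl dotp_suml /fS -mulrDr ler_wpM2l ?invr_ge0 // -big_split /=.
apply: ler_sum => i _.
exact: convex_gradient_ineq (f_grad i) (L_gt0 i) (g_smooth i) (f_convex i) x y.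
Qed.

Lemma fS_descent (S : {set 'I_n}) x y : (0 < #|S|)%N ->
  fS f S y <= fS f S x + dotp (gS g S x) (y - x) + Lmax / 2 * sqnorm (y - x).
Proof.
move=> S_gt0; have -> : Lmax / 2 * sqnorm (y - x) =
    (#|S|%:R)^-1 * \sum_(i in S) (Lmax / 2 * sqnorm (y - x)).
  by rewrite sumr_const -[(_ * _) *+ _]mulr_natl mulKf // pnatr_eq0 -lt0n.
rewrite /gS dotpZl dotp_suml /fS -!mulrDr ler_wpM2l ?invr_ge0 // -!big_split /=.
apply: ler_sum => i _; apply: le_trans (descent_upper (f_grad i) (L_gt0 i) (g_smooth i) x y) _.
rewrite lerD2l ler_wpM2r ?sqnorm_ge0 // ler_wpM2r ?invr_ge0 ?ler0n //.
exact: le_bigmax.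
Qed.

Lemma sgd_step_spec (S : {set 'I_n}) x : S \in batches n B ->
  exists2 gam, alpha <= gam <= gamma_b & sgd_step x S = x - gam *: gS g S x
    /\ gam * c * sqnorm (gS g S x) <= fS f S x - ell S.
Proof.
move=> S_batch; rewrite /Defs.sgd_step; set G := gS g S x.
have gap_ge0 : 0 <= fS f S x - ell S by rewrite subr_ge0 ell_le.
have [->|G_neq0] := eqVneq G 0.
  (* The iterate is not moved, which is also the step of size [alpha]. *)
  exists alpha; first by rewrite alpha_le_gamma_b lexx.
  by rewrite scaler0 subr0 /sqnorm dotp0l mulr0.
have G_gt0 : 0 < sqnorm G by rewrite lt_def sqnorm_eq0 G_neq0 sqnorm_ge0.
have cG_gt0 : 0 < c * sqnorm G by rewrite mulr_gt0.
exists (sps_step f g ell c gamma_b S x); last first.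
  split=> //; rewrite -mulrA -ler_pdivlMr // /sps_step ge_min lexx //.
rewrite /sps_step; apply/andP; split; last by rewrite ge_min lexx orbT.
rewrite le_min alpha_le_gamma_b andbT -/G.
apply: le_trans (_ : 1 / (2 * c * Lmax) <= _); first by rewrite ge_min lexx.
have := sqnorm_gradient_le Lmax_gt0
  (fun y => @fS_descent S x y (batch_nonempty S_batch)) (ell_le S_batch).
rewrite -/G ler_pdivlMr // => G_le.
have Lmax_neq0 := gt_eqF Lmax_gt0.
have -> : 1 / (2 * c * Lmax) * (c * sqnorm G) = sqnorm G / (2 * Lmax).
  by field; rewrite Lmax_neq0 gt_eqF.
by rewrite ler_pdivrMr ?mulr_gt0 ?Lmax_gt0 // mulrC.
Qed.

Lemma sgd_step_progress (S : {set 'I_n}) x : 1 <= c -> S \in batches n B ->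
  sqnorm (sgd_step x S - xstar) <=
  sqnorm (x - xstar) - alpha * (fS f S x - fS f S xstar) + 2 * gamma_b * (fS f S xstar - ell S).
Proof.
move=> c_ge1 S_batch; have [gam /andP[alpha_le gam_le] [-> gam_gap]] := sgd_step_spec x S_batch.
set G := gS g S x in gam_gap *; set fx := fS f S x in gam_gap *; set fs := fS f S xstar.
have cvx : fx + dotp G (xstar - x) <= fs := fS_gradient_ineq S x xstar.
have gap_x : 0 <= fx - ell S by rewrite subr_ge0 ell_le.
have gap_s : 0 <= fs - ell S by rewrite subr_ge0 ell_le.
have gam_ge0 : 0 <= gam by have := alpha_gt0; lra.
have sq_le : gam ^+ 2 * sqnorm G <= gam * (fx - ell S).
  rewrite expr2 -mulrA ler_wpM2l // (le_trans _ gam_gap) //.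
  by rewrite mulrAC ler_peMr // mulr_ge0 ?sqnorm_ge0.
have := ler_wpM2l gam_ge0 cvx; have := ler_wpM2r gap_x alpha_le.
have := ler_wpM2r gap_s gam_le; have := alpha_gt0.
rewrite sqnorm_sub_scale; nra.
Qed.

Lemma sgd_step_contraction (S : {set 'I_n}) x : 1 / 2 <= c -> S \in batches n B ->
  sqnorm (sgd_step x S - xstar) <= sqnorm (x - xstar)
    - 2 * alpha * (fS f S xstar - fS f S x - dotp (gS g S x) (xstar - x))
    + 2 * gamma_b * (fS f S xstar - ell S).
Proof.
move=> c_ge S_batch; have [gam /andP[alpha_le gam_le] [-> gam_gap]] := sgd_step_spec x S_batch.
set G := gS g S x in gam_gap *; set fx := fS f S x in gam_gap *; set fs := fS f S xstar.
have cvx : fx + dotp G (xstar - x) <= fs := fS_gradient_ineq S x xstar.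
set D := fs - fx - dotp G (xstar - x).
have D_ge0 : 0 <= D by rewrite /D; lra.
have gap_s : 0 <= fs - ell S by rewrite subr_ge0 ell_le.
have gam_ge0 : 0 <= gam by have := alpha_gt0; lra.
have step_le : gam * sqnorm G <= 2 * (fx - ell S).
  have : gam * sqnorm G * (1 / 2) <= gam * sqnorm G * c.
    by rewrite ler_wpM2l // mulr_ge0 ?sqnorm_ge0.
  lra.
have := ler_wpM2l gam_ge0 step_le; have := ler_wpM2r D_ge0 alpha_le.
have := ler_wpM2r gap_s gam_le.
rewrite sqnorm_sub_scale expr2 -mulrA /D; lra.
Qed.

Lemma mean_batches_fS y : mean (batches n B) (fun S => fS f S y) = favg f y.
Proof. by rewrite mean_subsets_avg ?B_gt0 ?card_ord. Qed.

Lemma mean_batches_dotp_gS x w :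
  mean (batches n B) (fun S => dotp (gS g S x) w) = dotp (gavg g x) w.
Proof.
under eq_mean do rewrite dotpZl dotp_suml.
by rewrite mean_subsets_avg ?B_gt0 ?card_ord // /gavg dotpZl dotp_suml.
Qed.

Lemma mean_batches_ell : mean (batches n B) ell = favg f xstar - sig.
Proof. by rewrite /sigma_hat2 opprB addrC subrK. Qed.

Lemma sigma_hat2_ge0 : 0 <= sig.
Proof.
rewrite /sigma_hat2 -mean_batches_fS -meanB -(mean_cst 0 card_batches_gt0).
by apply: ler_mean => S S_batch; rewrite subr_ge0 ell_le.
Qed.

Lemma mean_sgd_step_progress x : 1 <= c ->
  mean (batches n B) (fun S => sqnorm (sgd_step x S - xstar)) <=
  sqnorm (x - xstar) - alpha * (favg f x - favg f xstar) + 2 * gamma_b * sig.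
Proof.
move=> c_ge1; apply: le_trans (ler_mean (fun S => sgd_step_progress x c_ge1)) _.
rewrite meanD meanB !meanZ !meanB mean_cst ?card_batches_gt0 //.
rewrite !mean_batches_fS mean_batches_ell; lra.
Qed.

Lemma mean_sgd_step_contraction mu x : strongly_convex_with (favg f) (gavg g) mu ->
  1 / 2 <= c -> mean (batches n B) (fun S => sqnorm (sgd_step x S - xstar)) <=
  (1 - mu * alpha) * sqnorm (x - xstar) + 2 * gamma_b * sig.
Proof.
move=> strong c_ge; apply: le_trans (ler_mean (fun S => sgd_step_contraction x c_ge)) _.
rewrite meanD meanB !meanZ !meanB mean_cst ?card_batches_gt0 //.
rewrite !mean_batches_fS mean_batches_ell mean_batches_dotp_gS.
have := ler_wpM2l (ltW alpha_gt0) (strong x xstar).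
rewrite -opprB sqnormN; lra.
Qed.

Lemma favg_gradient_ineq x y : favg f x + dotp (gavg g x) (y - x) <= favg f y.
Proof.
rewrite -!mean_batches_fS -mean_batches_dotp_gS -meanD.
by apply: ler_mean => S _; exact: fS_gradient_ineq.
Qed.

Lemma favg_descent x y :
  favg f y <= favg f x + dotp (gavg g x) (y - x) + Lmax / 2 * sqnorm (y - x).
Proof.
rewrite -!mean_batches_fS -mean_batches_dotp_gS -meanD.
rewrite -[X in _ <= _ + X](mean_cst _ card_batches_gt0) -meanD.
by apply: ler_mean => S /batch_nonempty; exact: fS_descent.
Qed.

Lemma sps_convex_rate x0 K : 1 <= c -> (0 < K)%N ->
  expect B (fun t : K.-tuple {set 'I_n} =>
    favg f (avg_iterate f g ell c gamma_b x0 t) - favg f xstar)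
  <= sqnorm (x0 - xstar) / (alpha * K%:R) + 2 * gamma_b * sig / alpha.
Proof.
move=> c_ge1 K_gt0; rewrite expectE.
pose gap x := favg f x - favg f xstar.
have gap_grad x y : gap x + dotp (gavg g x) (y - x) <= gap y.
  by rewrite /gap; have := favg_gradient_ineq x y; lra.
have jensen (t : K.-tuple {set 'I_n}) : gap (avg_iterate f g ell c gamma_b x0 t) <=
    K%:R^-1 * \sum_(j < K) gap (iterate f g ell c gamma_b x0 (take j t)).
  exact: jensen_gradient_ineq
    (fun j : 'I_K => iterate f g ell c gamma_b x0 (take j t)) K_gt0 gap_grad.
apply: le_trans (ler_mean (fun t _ => jensen t)) _.
rewrite meanZ.
have := mean_foldl_telescope card_batches_gt0 (fun x => sqnorm_ge0 (x - xstar))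
  (fun x => mean_sgd_step_progress x c_ge1) K x0.
set M := mean _ _ => M_le.
have K_neq0 : K%:R != 0 :> R by rewrite pnatr_eq0 -lt0n.
have alpha_neq0 : alpha != 0 by rewrite gt_eqF ?alpha_gt0.
have -> : sqnorm (x0 - xstar) / (alpha * K%:R) + 2 * gamma_b * sig / alpha =
    K%:R^-1 * (alpha^-1 * (sqnorm (x0 - xstar) + 2 * gamma_b * sig * K%:R)).
  by field; rewrite alpha_neq0.
by rewrite ler_pM2l ?invr_gt0 ?ltr0n // ler_pdivlMl ?alpha_gt0.
Qed.

Lemma sps_strongly_convex_rate x0 mu k : 0 < mu ->
  strongly_convex_with (favg f) (gavg g) mu -> 1 / 2 <= c ->
  expect B (fun t : k.-tuple {set 'I_n} =>
    sqnorm (iterate f g ell c gamma_b x0 t - xstar))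
  <= (1 - mu * alpha) ^+ k * sqnorm (x0 - xstar) + 2 * gamma_b * sig / (mu * alpha).
Proof.
move=> mu_gt0 strong c_ge; rewrite expectE.
have mu_alpha_gt0 : 0 < mu * alpha by rewrite mulr_gt0 ?alpha_gt0.
have b_ge0 : 0 <= 2 * gamma_b * sig by rewrite !mulr_ge0 ?sigma_hat2_ge0 ?ltW.
(* For [d = 0] strong convexity says nothing about [mu], but all norms vanish. *)
have [d0 | d_gt0] := posnP d.
  have sqnorm0 (u : 'rV[R]_d) : sqnorm u = 0.
    by apply: big1 => j; have := ltn_ord j; rewrite {2}d0.
  under eq_mean do rewrite sqnorm0.
  rewrite sqnorm0 mulr0 add0r /mean big1 ?mulr0 //.
  by rewrite divr_ge0 // ltW.
have mu_le : mu <= Lmax :=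
  strong_convexity_le_smoothness d_gt0 (strong xstar) (favg_descent xstar).
have mu_alpha_le1 : mu * alpha <= 1.
  apply: le_trans (_ : Lmax * (1 / (2 * c * Lmax)) <= 1).
    by apply: ler_pM => //; [exact: ltW | exact: ltW alpha_gt0 | rewrite ge_min lexx].
  have -> : Lmax * (1 / (2 * c * Lmax)) = (2 * c)^-1.
    by field; rewrite !gt_eqF ?Lmax_gt0.
  by rewrite invf_le1 ?mulr_gt0 //; lra.
have rho_ge0 : 0 <= 1 - mu * alpha by rewrite subr_ge0.
apply: le_trans (mean_foldl_contraction (step := sgd_step) card_batches_gt0
  (V := fun x => sqnorm (x - xstar)) rho_ge0
  (fun x => mean_sgd_step_contraction x strong c_ge) k x0) _.
rewrite lerD2l ler_wpM2l //.
have := @sum_exprn_le_inv _ (1 - mu * alpha) k; rewrite subKr; apply.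
by rewrite rho_ge0 ltrBlDr ltrDl.
Qed.

End SPSmax.

Theorem theorem2 (R : realType) (n d B : nat)
  (f : 'I_n -> 'rV[R]_d -> R) (g : 'I_n -> 'rV[R]_d -> 'rV[R]_d)
  (L : 'I_n -> R) (ell : {set 'I_n} -> R) (c gamma_b : R)
  (x0 xstar : 'rV[R]_d) :
  (0 < B)%N -> (B <= n)%N ->
  (forall i, is_gradient (f i) (g i)) ->
  (forall i, convex_fun (f i)) ->
  (forall i, 0 < L i) ->
  (forall i, smooth_with (g i) (L i)) ->
  (forall x, favg f xstar <= favg f x) ->
  (forall S, S \in batches n B -> forall x, ell S <= fS f S x) ->
  0 < c -> 0 < gamma_b ->
  let Lmax := \big[Num.max/0]_(i < n) L i in
  let alpha := Num.min (1 / (2 * c * Lmax)) gamma_b in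
  let sig := sigma_hat2 f ell B xstar in
  (* (i) *)
  (c = 1 ->
   forall K : nat, (1 <= K)%N ->
     expect B (fun t : K.-tuple {set 'I_n} =>
        favg f (avg_iterate f g ell c gamma_b x0 t) - favg f xstar)
     <= sqnorm (x0 - xstar) / (alpha * K%:R) + 2 * gamma_b * sig / alpha)
  /\
  (* (ii) *)
  (forall mu : R, 0 < mu -> strongly_convex_with (favg f) (gavg g) mu ->
   1 / 2 <= c ->
   forall k : nat,
     expect B (fun t : k.-tuple {set 'I_n} =>
        sqnorm (iterate f g ell c gamma_b x0 t - xstar))
     <= (1 - mu * alpha) ^+ k * sqnorm (x0 - xstar)
        + 2 * gamma_b * sig / (mu * alpha)).
Proof.
move=> B_gt0 B_le_n f_grad f_convex L_gt0 g_smooth _ ell_le c_gt0 gamma_b_gt0 Lmax alpha sig.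
split=> [c1 K K_gt0 | mu mu_gt0 strong c_ge k].
- by apply: sps_convex_rate => //; rewrite c1.
- exact: sps_strongly_convex_rate.
Qed.
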